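(* Let $L\ge2$ and let $C'=(\{0,\dots,L-1\},\delta')$ be a cellular automaton with neighborhood size $1$ and blank symbol $0$ (i.e. $\delta'(0,0,0)=0$). Define $\varphi(a)=1^{1+L-a}0^a1\in\{0,1\}^{L+2}$ for $a\in\{0,\dots,L-1\}$, and extend $\varphi$ to configurations $c:\mathbb{Z}\to\{0,\dots,L-1\}$ by $\varphi(c)(q(L+2)+k)=$ the $k$-th bit ($0\le k<L+2$, counting from $0$) of $\varphi(c(q))$. Let $r=2(L+2)$. Then there exists $\delta^{(2)}:\{0,1\}^{2r+1}\to\{0,1\}$ with $\delta^{(2)}(1,\dots,1)=1$ such that the binary cellular automaton $(\{0,1\},\delta^{(2)})$, started from $b_0=\varphi(c_0)$ where $c_0(u)=1$ if $u=0$ and $c_0(u)=0$ otherwise, produces configurations $b_0,b_1,\dots$ with $b_t=\varphi(c_t)$ for all $t\ge0$, where $c_0,c_1,\dots$ are the configurations produced by $C'$ from $c_0$.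
   Context: A cellular automaton $(A,\delta)$ with neighborhood size $r$ acts on configurations $c:\mathbb{Z}\to A$; one step maps $c$ to $c'$ with $c'(u)=\delta(c(u-r),\dots,c(u),\dots,c(u+r))$. *)

From Stdlib Require Import ZArith.
From mathcomp Require Import all_boot.
Set Implicit Arguments. Unset Strict Implicit. Unset Printing Implicit Defensive.

Definition ca_step (A : Type) (r : nat) (delta : (2 * r).+1.-tuple A -> A)
  (c : Z -> A) : Z -> A :=
  fun u => delta (mktuple (fun i : 'I_(2 * r).+1 =>
                              c (u - Z.of_nat r + Z.of_nat i)%Z)).

Definition ca_run (A : Type) (r : nat) (delta : (2 * r).+1.-tuple A -> A)
  (c0 : Z -> A) (t : nat) : Z -> A := iter t%N (ca_step delta) c0.

(* k-th bit (from 0) of phi(a) = 1^(1+L-a) 0^a 1, a word of length L+2. *)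
Definition phi_bit (L a k : nat) : bool := (k < 1 + L - a) || (L < k).

Definition phi_conf (L : nat) (c : Z -> 'I_L) : Z -> bool :=
  fun u => phi_bit L (c (u / Z.of_nat (L + 2))%Z)
                     (Z.to_nat (u mod Z.of_nat (L + 2))%Z).

Definition init_conf (L : nat) (hL : 1 < L) : Z -> 'I_L :=
  fun u => if (u =? 0)%Z then Ordinal hL else Ordinal (ltnW hL).

From Stdlib Require Import ZArith Lia Classical ClassicalEpsilon FunctionalExtensionality.
From mathcomp Require Import all_boot zify.
Set Implicit Arguments. Unset Strict Implicit. Unset Printing Implicit Defensive.

(* In the encoding phi(a) = 1^(1+L-a) 0^a 1 the factor 01 occurs only at the
   end of a non-blank block.  A window of radius 2(L+2) around a cell u
   contains the blocks q-1, q, q+1 of u entirely; if one of them is not blank,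
   the position of its 01 factor reveals the offset of u in its block, and
   then the three blocks themselves, hence the new block q and the new bit at
   u.  If all three blocks are blank the window carries no alignment
   information, but none is needed: the new block q is blank again, and the
   encoding of a blank block is all ones.  So the bit at u after one step is a
   function of the window, i.e. a local rule of radius 2(L+2). *)

Section LocalRules.

Variables (A : Type) (r : nat).

Definition window (b : Z -> A) (u : Z) : (2 * r).+1.-tuple A :=
  mktuple (fun i : 'I_(2 * r).+1 => b (u - Z.of_nat r + Z.of_nat i)%Z).

Lemma ca_stepE (delta : (2 * r).+1.-tuple A -> A) b u :
  ca_step delta b u = delta (window b u).
Proof. by []. Qed.

Lemma window_const (a : A) u : window (fun _ => a) u = nseq_tuple (2 * r).+1 a.
Proof. by apply: eq_from_tnth => i; rewrite tnth_mktuple tnth_nseq. Qed.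

Definition agree_around (b : Z -> A) u (b' : Z -> A) u' :=
  forall d, (- Z.of_nat r <= d <= Z.of_nat r)%Z -> b (u + d)%Z = b' (u' + d)%Z.

Lemma eq_window_agree (b b' : Z -> A) u u' :
  window b u = window b' u' -> agree_around b u b' u'.
Proof.
move=> E d hd; have lt_i : (Z.to_nat (d + Z.of_nat r) < (2 * r).+1)%N by lia.
have := congr1 (fun w => tnth w (Ordinal lt_i)) E; rewrite /= !tnth_mktuple /=.
have shift v : (v - Z.of_nat r + (d + Z.of_nat r) = v + d)%Z by lia.
by rewrite Z2Nat.id ?shift //; lia.
Qed.

Lemma ca_step_congr (delta : (2 * r).+1.-tuple A -> A) (c c' : Z -> A) q q' :
  (forall j, (- Z.of_nat r <= j <= Z.of_nat r)%Z -> c (q + j)%Z = c' (q' + j)%Z) ->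
  ca_step delta c q = ca_step delta c' q'.
Proof.
move=> H; rewrite /ca_step; congr delta; apply: eq_mktuple => i.
have shift v : (v - Z.of_nat r + Z.of_nat i = v + (Z.of_nat i - Z.of_nat r))%Z by lia.
by rewrite !shift; apply: H; have := ltn_ord i; lia.
Qed.

Lemma ca_step_const (delta : (2 * r).+1.-tuple A -> A) (a : A) :
  ca_step delta (fun _ => a) = fun _ => delta (nseq_tuple (2 * r).+1 a).
Proof. by apply: functional_extensionality => u; rewrite ca_stepE window_const. Qed.

Lemma exists_ca_rule (X : Type) (enc f : X -> Z -> A) (a0 : A) :
  (forall x x' u u', window (enc x) u = window (enc x') u' -> f x u = f x' u') ->
  exists delta : (2 * r).+1.-tuple A -> A, forall x, ca_step delta (enc x) = f x.
Proof.
move=> local.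
have [delta Hdelta] : exists delta : (2 * r).+1.-tuple A -> A,
    forall w x u, window (enc x) u = w -> f x u = delta w.
  apply: (choice (fun w a => forall x u, window (enc x) u = w -> f x u = a)) => w.
  have [[[x u] /= Exu]|none] := classic (exists p : X * Z, window (enc p.1) p.2 = w).
    by exists (f x u) => x' u' Ex'; apply: local; rewrite Ex' Exu.
  by exists a0 => x u Exu; exfalso; apply: none; exists (x, u).
by exists delta => x; apply: functional_extensionality => u; rewrite ca_stepE -(Hdelta _ x u).
Qed.

Lemma ca_run_conj (B : Type) (s : nat) (delta : (2 * r).+1.-tuple A -> A)
    (delta' : (2 * s).+1.-tuple B -> B) (enc : (Z -> B) -> Z -> A) :
  (forall c, ca_step delta (enc c) = enc (ca_step delta' c)) ->
  forall c t, ca_run delta (enc c) t = enc (ca_run delta' c t).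
Proof. by move=> Hstep c; elim=> [|t IH] //=; rewrite /ca_run /= -Hstep -IH. Qed.

End LocalRules.

Section BlockEncoding.

Variable L : nat.
Local Notation M := (Z.of_nat (L + 2)).

Lemma phi_bit_inj (a b : 'I_L) :
  (forall k, k < L + 2 -> phi_bit L a k = phi_bit L b k) -> a = b.
Proof.
move=> H; apply: val_inj; wlog lt_ba : a b H / b < a.
  move=> W; case: (ltngtP a b) => // lt; last exact: W.
  by symmetry; apply: W => // k /H.
exfalso; have lt_aL := ltn_ord a; have := H (L - b) ltac:(lia).
by rewrite /phi_bit (_ : L - b < 1 + L - b) /=; [move=> /orP | ]; lia.
Qed.

Lemma phi_bit_rise a k : phi_bit L a k = false -> phi_bit L a k.+1 = true -> k = L.
Proof. rewrite /phi_bit; lia. Qed.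

Lemma phi_bit_last a : phi_bit L a L.+1 = true.
Proof. rewrite /phi_bit; lia. Qed.

Lemma phi_bit_blank k : k < L + 2 -> phi_bit L 0 k = true.
Proof. rewrite /phi_bit; lia. Qed.

Open Scope Z_scope.

Lemma phi_conf_block (c : Z -> 'I_L) q k :
  0 <= k < M -> phi_conf c (q * M + k) = phi_bit L (c q) (Z.to_nat k).
Proof.
move=> hk; rewrite /phi_conf.
by rewrite -(Z.div_unique _ _ q k) -?(Z.mod_unique _ _ q k) //; first left; lia.
Qed.

Lemma phi_conf_rise_at (c : Z -> 'I_L) q : (0 < c q)%N ->
  phi_conf c (q * M + Z.of_nat L) = false /\ phi_conf c (q * M + Z.of_nat L + 1) = true.
Proof.
move=> pos; rewrite -Z.add_assoc !phi_conf_block; try lia.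
rewrite Nat2Z.id (_ : Z.to_nat _ = L.+1); last lia.
by split; [rewrite /phi_bit; lia | apply: phi_bit_last].
Qed.

Lemma phi_conf_rise (c : Z -> 'I_L) p :
  phi_conf c p = false -> phi_conf c (p + 1) = true -> p mod M = Z.of_nat L.
Proof.
have hk := Z.mod_pos_bound p M ltac:(lia).
have hp : p = p / M * M + p mod M by have := Z_div_mod_eq_full p M; lia.
move: (p / M) (p mod M) hk hp => q k hk -> h0 h1.
rewrite phi_conf_block // in h0.
have [lt_kL | eq_kL] : k < Z.of_nat L + 1 \/ k = Z.of_nat L + 1 by lia.
  have succ_k : Z.to_nat (k + 1) = (Z.to_nat k).+1 by lia.
  rewrite -Z.add_assoc phi_conf_block ?succ_k in h1; last lia.
  by have := phi_bit_rise h0 h1; lia.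
by rewrite eq_kL (_ : Z.to_nat _ = L.+1) ?phi_bit_last in h0; lia.
Qed.

Section Agreement.

Variables (c c' : Z -> 'I_L) (u u' : Z).
Hypothesis near : agree_around (2 * (L + 2)) (phi_conf c) u (phi_conf c') u'.

Lemma agree_mod j : -1 <= j <= 1 -> (0 < c (u / M + j)%Z)%N -> u mod M = u' mod M.
Proof.
move=> hj pos; have [rise0 rise1] := phi_conf_rise_at pos.
have hk := Z.mod_pos_bound u M ltac:(lia).
have hu := Z_div_mod_eq_full u M.
set d := j * M + Z.of_nat L - u mod M.
have hd : - Z.of_nat (2 * (L + 2)) <= d /\ d + 1 <= Z.of_nat (2 * (L + 2)) by rewrite /d; nia.
have shift : (u / M + j) * M + Z.of_nat L = u + d by rewrite /d {2}hu; ring.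
rewrite shift near in rise0; last lia.
rewrite shift -Z.add_assoc near in rise1; last lia.
have hmod := phi_conf_rise rise0 ltac:(by rewrite -Z.add_assoc).
have hud := Z_div_mod_eq_full (u' + d) M.
apply: (Z.mod_unique _ _ ((u' + d) / M - j)); first by left.
rewrite Z.mul_sub_distr_l; rewrite hmod in hud; rewrite /d in hud *; lia.
Qed.

Lemma agree_blocks : u mod M = u' mod M ->
  forall j, -1 <= j <= 1 -> c (u / M + j) = c' (u' / M + j).
Proof.
move=> ek j hj; apply: phi_bit_inj => k hk.
have hr := Z.mod_pos_bound u M ltac:(lia).
have hu := Z_div_mod_eq_full u M; have hu' := Z_div_mod_eq_full u' M.
have := @near (j * M + Z.of_nat k - u mod M) ltac:(nia).
rewrite (_ : u + _ = (u / M + j) * M + Z.of_nat k); last lia.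
rewrite (_ : u' + _ = (u' / M + j) * M + Z.of_nat k); last lia.
by rewrite !phi_conf_block ?Nat2Z.id //; lia.
Qed.

End Agreement.

Section Step.

Variables (hL : (1 < L)%N) (delta' : (2 * 1).+1.-tuple 'I_L -> 'I_L).
Local Notation blank := (Ordinal (ltnW hL)).
Hypothesis hblank : delta' (nseq_tuple (2 * 1).+1 blank) = blank.

Definition active (c : Z -> 'I_L) q := exists2 j, -1 <= j <= 1 & (0 < c (q + j)%Z)%N.

Lemma active_or_quiescent (c : Z -> 'I_L) q :
  active c q \/ forall j, -1 <= j <= 1 -> c (q + j) = blank.
Proof.
have [act | none] := classic (active c q); [by left | right].
move=> j hj; apply: val_inj => /=; apply/eqP; rewrite -leqn0 leqNgt.
by apply/negP => pos; apply: none; exists j.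
Qed.

Lemma phi_step_quiescent (c : Z -> 'I_L) u :
  (forall j, -1 <= j <= 1 -> c (u / M + j) = blank) ->
  phi_conf (ca_step delta' c) u = true.
Proof.
move=> quiet; rewrite /phi_conf (@ca_step_congr _ _ _ c (fun _ => blank) _ 0).
  rewrite ca_step_const hblank phi_bit_blank //.
  by have := Z.mod_pos_bound u M ltac:(lia); lia.
by move=> j hj; apply: quiet; lia.
Qed.

Lemma phi_step_active (c c' : Z -> 'I_L) u u' :
  agree_around (2 * (L + 2)) (phi_conf c) u (phi_conf c') u' ->
  active c (u / M) ->
  phi_conf (ca_step delta' c) u = phi_conf (ca_step delta' c') u'.
Proof.
move=> near [j hj pos]; have ek := agree_mod near hj pos.
rewrite /phi_conf ek (@ca_step_congr _ _ _ c c' _ (u' / M)) // => i hi.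
by apply: (agree_blocks near ek); lia.
Qed.

Lemma phi_step_local (c c' : Z -> 'I_L) u u' :
  window (2 * (L + 2)) (phi_conf c) u = window (2 * (L + 2)) (phi_conf c') u' ->
  phi_conf (ca_step delta' c) u = phi_conf (ca_step delta' c') u'.
Proof.
move=> /eq_window_agree near.
have near' : agree_around (2 * (L + 2)) (phi_conf c') u' (phi_conf c) u.
  by move=> d hd; rewrite near.
have [act | quiet] := active_or_quiescent c (u / M); first exact: phi_step_active.
have [act' | quiet'] := active_or_quiescent c' (u' / M).
  by symmetry; apply: phi_step_active near' act'.
by rewrite !phi_step_quiescent.
Qed.

End Step.

End BlockEncoding.

Theorem lemma1 (L : nat) (hL : 1 < L)
  (delta' : (2 * 1).+1.-tuple 'I_L -> 'I_L)
  (hblank : delta' (nseq_tuple (2 * 1).+1 (Ordinal (ltnW hL))) = Ordinal (ltnW hL)) :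
  exists delta2 : (2 * (2 * (L + 2))).+1.-tuple bool -> bool,
    delta2 (nseq_tuple (2 * (2 * (L + 2))).+1 true) = true /\
    forall t : nat,
      ca_run delta2 (phi_conf (init_conf hL)) t
      = phi_conf (ca_run delta' (init_conf hL) t).
Proof.
pose quiet : Z -> 'I_L := fun _ => Ordinal (ltnW hL).
have quiet_fixed : ca_step delta' quiet = quiet by rewrite ca_step_const hblank.
have phi_quiet : phi_conf quiet = fun _ => true.
  apply: functional_extensionality => u; apply: phi_bit_blank.
  by have := Z.mod_pos_bound u (Z.of_nat (L + 2)) ltac:(lia); lia.
have [delta2 delta2_step] := exists_ca_rule (enc := @phi_conf L)
  (f := fun c => phi_conf (ca_step delta' c)) true (phi_step_local hblank).
exists delta2; split; last exact: ca_run_conj.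
(* The all-ones window is a window of the encoded blank configuration. *)
by rewrite -(window_const _ _ 0) -phi_quiet -ca_stepE delta2_step quiet_fixed phi_quiet.
Qed.
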